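(* For every finite hypergraph $\mathcal{H}=(X,\mathcal{E})$ with no isolated vertices and no empty hyperedge, $\tau_{\rm gr}(\mathcal{H})=\rho_{\rm gr}(\mathcal{H})$.
   Context: A vertex of a hypergraph is isolated if it lies in no hyperedge. A sequence $(C_1,\ldots,C_r)$ of distinct hyperedges is a legal hyperedge sequence if $C_i\setminus\bigcup_{j<i}C_j\neq\emptyset$ for all $i\in\{2,\ldots,r\}$; it is an edge covering sequence if moreover $C_1\cup\cdots\cup C_r=X$. The Grundy covering number $\rho_{\rm gr}(\mathcal{H})$ is the maximum length of an edge covering sequence. A legal transversal sequence is a sequence $(v_1,\ldots,v_t)$ of distinct vertices of $X$ such that for each $i$ there is a hyperedge $E_i\in\mathcal{E}$ with $v_i\in E_i$ and $v_j\notin E_i$ for all $j<i$, and such that every hyperedge of $\mathcal{E}$ contains some $v_i$. The Grundy transversal number $\tau_{\rm gr}(\mathcal{H})$ is the maximum length of a legal transversal sequence. *)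

From mathcomp Require Import all_boot.
Set Implicit Arguments. Unset Strict Implicit. Unset Printing Implicit Defensive.

Section Hypergraph.
Variable X : finType.
Variable E : {set {set X}}.

Definition no_isolated : Prop := forall x : X, exists2 e, e \in E & x \in e.

Definition no_empty_edge : Prop := set0 \notin E.

(* (C_1,...,C_r) distinct hyperedges with C_i \ (C_1 u ... u C_{i-1}) <> empty
   for every i >= 2 (0-based index i >= 1 below). *)
Definition legal_edge_seq (s : seq {set X}) : bool :=
  [&& uniq s, all (fun C => C \in E) s &
      [forall i : 'I_(size s), (0 < i) ==>
         ~~ (tnth (in_tuple s) i \subset \bigcup_(C <- take i s) C)]].

Definition edge_covering_seq (s : seq {set X}) : bool :=
  legal_edge_seq s && (\bigcup_(C <- s) C == [set: X]).

(* Grundy covering number: maximum length of an edge covering sequence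
   (lengths are bounded by #|E| since the hyperedges are distinct). *)
Definition rho_gr : nat :=
  \max_(k < #|E|.+1 | [exists t : k.-tuple {set X}, edge_covering_seq t]) k.

Definition legal_transversal_seq (s : seq X) : bool :=
  [&& uniq s,
      [forall i : 'I_(size s), [exists e in E,
         (tnth (in_tuple s) i \in e) &&
         [forall j : 'I_(size s), (j < i) ==> (tnth (in_tuple s) j \notin e)]]] &
      [forall e in E, has (fun v => v \in e) s]].

(* Grundy transversal number (lengths bounded by #|X|, vertices distinct). *)
Definition tau_gr : nat :=
  \max_(k < #|X|.+1 | [exists t : k.-tuple X, legal_transversal_seq t]) k.

End Hypergraph.

From mathcomp Require Import all_boot.
From mathcomp Require Import zify.
Set Implicit Arguments. Unset Strict Implicit. Unset Printing Implicit Defensive.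

(* Both Grundy numbers are governed by the same combinatorial object, a
   staircase: vertices x_1, ..., x_r and hyperedges C_1, ..., C_r with
   x_i in C_i and x_i outside C_j for j < i.  Choosing a private vertex
   x_i in C_i \ (C_1 u ... u C_{i-1}) turns a legal hyperedge sequence into a
   staircase, and read backwards, x_r, ..., x_1 is a legal vertex sequence
   witnessed by C_r, ..., C_1; conversely a legal vertex sequence with its
   witnesses, read backwards, is a staircase and hence a legal hyperedge
   sequence.  Since there are no isolated vertices, a legal hyperedge sequence
   extends greedily to an edge covering sequence, and since there are no empty
   hyperedges, a legal vertex sequence extends greedily to a legal transversal
   sequence; neither extension shortens the sequence, so each maximum bounds
   the other. *)

Lemma nat_choice (T : Type) (d : T) (P : nat -> T -> Prop) n :
  (forall i, i < n -> exists y, P i y) ->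
  exists f : nat -> T, forall i, i < n -> P i (f i).
Proof.
elim: n => [|n IH] H; first by exists (fun _ => d).
have [f Hf] := IH (fun i ilt => H i (leqW ilt)).
have [y Hy] := H n (ltnSn n).
exists (fun i => if i == n then y else f i) => i ilt; case: eqP => [-> // | ne].
apply: Hf; lia.
Qed.

Lemma greedy_extension (T : Type) (P : seq T -> Prop) (Q : pred (seq T)) N :
  (forall s, P s -> size s <= N) ->
  (forall s, P s -> ~~ Q s -> exists y, P (rcons s y)) ->
  forall s, P s -> exists2 s', P s' /\ Q s' & size s <= size s'.
Proof.
move=> bounded step s; have [m] := ubnP (N - size s).
elim: m s => // m IH s hm Ps; case Qs: (Q s); first by exists s.
have [y Py] := step s Ps (negbT Qs).
have ylt : N - size (rcons s y) < m.
  by have := bounded _ Py; rewrite size_rcons; lia.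
have [s' Ps' le] := IH _ ylt Py; exists s' => //.
by apply: leq_trans le; rewrite size_rcons.
Qed.

Section MaxSize.
Variables (T : finType) (N : nat) (P : pred (seq T)).

Local Notation max_size := (\max_(k < N.+1 | [exists t : k.-tuple T, P t]) k).

Lemma leq_max_size s : P s -> size s <= N -> size s <= max_size.
Proof.
move=> Ps le; have ltsN : size s < N.+1 by [].
apply: (@leq_bigmax_cond _ _ _ (Ordinal ltsN)).
by apply/existsP; exists (in_tuple s).
Qed.

Lemma max_size_leq m : (forall s, P s -> size s <= m) -> max_size <= m.
Proof.
by move=> H; apply/bigmax_leqP => k /existsP [t Pt]; rewrite -(size_tuple t) H.
Qed.

End MaxSize.

Section Hypergraph.
Variables (X : finType) (E : {set {set X}}).

Definition legal_vertex_seq (x0 : X) (s : seq X) : Prop :=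
  uniq s /\ forall i, i < size s -> exists e,
    [/\ e \in E, nth x0 s i \in e & forall j, j < i -> nth x0 s j \notin e].

Definition is_transversal (s : seq X) : bool := [forall e in E, has (mem e) s].

Definition staircase n (x : nat -> X) (C : nat -> {set X}) : Prop :=
  forall i, i < n -> [/\ C i \in E, x i \in C i & forall j, j < i -> x i \notin C j].

Lemma legal_edge_seqP c : legal_edge_seq E c <->
  [/\ uniq c, {subset c <= E} & forall i, 0 < i -> i < size c ->
     ~~ (nth set0 c i \subset \bigcup_(D <- take i c) D)].
Proof.
split.
- case/and3P => u /allP a /forallP f; split => // i i0 ilt.
  by have := f (Ordinal ilt); rewrite /= i0 (tnth_nth set0).
- case=> u a f; apply/and3P; split => //; first exact/allP.
  by apply/forallP => i; apply/implyP => i0; rewrite (tnth_nth set0) f.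
Qed.

Lemma legal_transversal_seqP x0 s :
  legal_transversal_seq E s <-> legal_vertex_seq x0 s /\ is_transversal s.
Proof.
split.
- case/and3P => u /forallP f cover; split => //; split => // i ilt.
  have /existsP [e /andP [eE /andP [ve /forallP g]]] := f (Ordinal ilt).
  exists e; split => //; first by rewrite (tnth_nth x0) in ve.
  move=> j ji; have jlt := ltn_trans ji ilt.
  by have := g (Ordinal jlt); rewrite /= ji (tnth_nth x0).
- case=> [[u f] cover]; apply/and3P; split => //.
  apply/forallP => i; have [e [eE ve g]] := f i (ltn_ord i).
  apply/existsP; exists e; rewrite eE (tnth_nth x0) ve.
  by apply/forallP => j; apply/implyP => ji; rewrite (tnth_nth x0) g.
Qed.

Lemma staircase_notin n x C i j :
  staircase n x C -> i < n -> j < n -> i != j -> x i \notin C j \/ x j \notin C i.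
Proof.
move=> H ilt jlt; case: ltngtP => // ij _.
- by right; have [_ _ /(_ i ij)] := H j jlt.
- by left; have [_ _ /(_ j ij)] := H i ilt.
Qed.

Lemma staircase_injx n x C : staircase n x C -> {in iota 0 n &, injective x}.
Proof.
move=> H i j; rewrite !mem_iota => /andP [_ ilt] /andP [_ jlt] xij.
apply/eqP; apply: contraT => ij; have [_ xi _] := H i ilt; have [_ xj _] := H j jlt.
by case: (staircase_notin H ilt jlt ij); rewrite ?xij ?xj // -xij xi.
Qed.

Lemma staircase_injC n x C : staircase n x C -> {in iota 0 n &, injective C}.
Proof.
move=> H i j; rewrite !mem_iota => /andP [_ ilt] /andP [_ jlt] Cij.
apply/eqP; apply: contraT => ij; have [_ xi _] := H i ilt; have [_ xj _] := H j jlt.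
by case: (staircase_notin H ilt jlt ij); rewrite ?Cij ?xj // -Cij xi.
Qed.

Lemma staircase_legal_edge_seq n x C :
  staircase n x C -> legal_edge_seq E (mkseq C n).
Proof.
move=> H; apply/legal_edge_seqP; rewrite size_mkseq; split.
- by rewrite (map_inj_in_uniq (staircase_injC H)) iota_uniq.
- by move=> D /mapP [i]; rewrite mem_iota => /andP [_ /H []] ? _ _ ->.
- move=> i _ ilt; have [_ xi notin] := H i ilt.
  rewrite nth_mkseq // /mkseq -map_take take_iota; apply/subsetPn; exists (x i) => //.
  rewrite bigcup_seq; apply/bigcupP => -[D /mapP [j]].
  by rewrite mem_iota => /andP [_ jlt] ->; apply/negP/notin; lia.
Qed.

Lemma legal_edge_seq_staircase (x0 : X) c :
  no_empty_edge E -> legal_edge_seq E c -> exists x, staircase (size c) x (nth set0 c).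
Proof.
move=> ne /legal_edge_seqP [_ sub fresh].
have private i : i < size c -> exists v, v \in nth set0 c i :\: \bigcup_(D <- take i c) D.
  move=> ilt; apply/set0Pn; have [i0|i0] := posnP i.
  - rewrite i0 in ilt *; rewrite take0 big_nil setD0; apply: contraNneq ne => <-; exact/sub/mem_nth.
  - by have /subsetPn [v vi vU] := fresh i i0 ilt; apply/set0Pn; exists v; rewrite inE vi vU.
have [x Hx] := nat_choice x0 private; exists x => i ilt.
have /setDP [xi xU] := Hx i ilt; split => //; first exact/sub/mem_nth.
move=> j ji; apply: contra xU => xj; rewrite bigcup_seq; apply/bigcupP.
exists (nth set0 c j) => //; rewrite -(nth_take set0 ji) mem_nth // size_takel //.
exact: ltnW.
Qed.

(* Reading a staircase backwards: index [i] of the vertex sequence is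
   step [n.-1 - i] of the staircase. *)
Lemma staircase_legal_vertex_seq (x0 : X) n x C :
  staircase n x C -> legal_vertex_seq x0 (mkseq (fun i => x (n.-1 - i)) n).
Proof.
move=> H; rewrite /legal_vertex_seq size_mkseq; split.
- rewrite map_inj_in_uniq ?iota_uniq // => i j; rewrite !mem_iota => ilt jlt xij.
  by have := staircase_injx H _ _ xij; rewrite !mem_iota; lia.
- move=> i ilt; have [CE xC _] := H (n.-1 - i) ltac:(lia).
  exists (C (n.-1 - i)); split => //; first by rewrite nth_mkseq.
  move=> j ji; rewrite nth_mkseq; last lia.
  by have [_ _ notin] := H (n.-1 - j) ltac:(lia); apply: notin; lia.
Qed.

Lemma legal_vertex_seq_staircase x0 s : legal_vertex_seq x0 s ->
  exists C, staircase (size s) (fun i => nth x0 s ((size s).-1 - i)) C.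
Proof.
case=> _ /(nat_choice set0) [W HW].
exists (fun i => W ((size s).-1 - i)) => i ilt.
have [WE xW _] := HW ((size s).-1 - i) ltac:(lia); split => // j ji.
by have [_ _ notin] := HW ((size s).-1 - j) ltac:(lia); apply: notin; lia.
Qed.

Lemma legal_edge_seq_size c : legal_edge_seq E c -> size c <= #|E|.
Proof.
by case/legal_edge_seqP => u sub _; rewrite -(card_uniqP u); apply/subset_leq_card/subsetP.
Qed.

Lemma legal_vertex_seq_size x0 s : legal_vertex_seq x0 s -> size s <= #|X|.
Proof. by case=> u _; rewrite -(card_uniqP u) max_card. Qed.

Lemma legal_edge_seq_rcons c e : legal_edge_seq E c -> e \in E ->
  ~~ (e \subset \bigcup_(D <- c) D) -> legal_edge_seq E (rcons c e).
Proof.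
move=> /legal_edge_seqP [u sub fresh] eE enew; apply/legal_edge_seqP; split.
- rewrite rcons_uniq u andbT; apply: contra enew => ec.
  by rewrite bigcup_seq (bigcup_sup e).
- by move=> D; rewrite mem_rcons inE => /predU1P [->|/sub].
- move=> i i0; rewrite size_rcons ltnS leq_eqVlt => /predU1P [->|ilt].
  + by rewrite nth_rcons ltnn eqxx -cats1 take_size_cat.
  + by rewrite nth_rcons ilt -cats1 takel_cat ?(ltnW ilt) ?fresh.
Qed.

Lemma legal_vertex_seq_rcons x0 s v e : legal_vertex_seq x0 s -> e \in E -> v \in e ->
  ~~ has (mem e) s -> legal_vertex_seq x0 (rcons s v).
Proof.
move=> [u w] eE ve emiss; split.
- by rewrite rcons_uniq u andbT; apply: contra emiss => vs; apply/hasP; exists v.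
- move=> i; rewrite size_rcons ltnS leq_eqVlt => /predU1P [->|ilt].
  + exists e; rewrite nth_rcons ltnn eqxx; split => // j jlt.
    by rewrite nth_rcons jlt; apply/(hasPn emiss)/mem_nth.
  + have [e' [e'E ve' notin]] := w i ilt; exists e'.
    rewrite nth_rcons ilt; split => // j ji.
    by rewrite nth_rcons (ltn_trans ji ilt) notin.
Qed.

Lemma legal_edge_seq_extend c : no_isolated E -> legal_edge_seq E c ->
  exists2 c', edge_covering_seq E c' & size c <= size c'.
Proof.
move=> ni lc.
have [c' [lc' cover] le] : exists2 c', legal_edge_seq E c' /\
    (\bigcup_(D <- c') D == [set: X]) & size c <= size c'.
  apply: (greedy_extension (@legal_edge_seq_size)) lc => d ld.
  rewrite eqEsubset subsetT /= => /subsetPn [v _ vU].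
  have [e eE ve] := ni v; exists e; apply: legal_edge_seq_rcons => //.
  by apply/subsetPn; exists v.
by exists c'; rewrite ?/edge_covering_seq ?lc'.
Qed.

Lemma legal_vertex_seq_extend x0 s : no_empty_edge E -> legal_vertex_seq x0 s ->
  exists2 s', legal_transversal_seq E s' & size s <= size s'.
Proof.
move=> ne ls.
have [s' [ls' cover] le] : exists2 s', legal_vertex_seq x0 s' /\ is_transversal s' &
    size s <= size s'.
  apply: (greedy_extension (@legal_vertex_seq_size x0)) ls => t lt.
  rewrite negb_forall_in => /existsP [e /andP [eE emiss]].
  have /set0Pn [v ve] : e != set0 by apply: contraNneq ne => <-.
  by exists v; apply: legal_vertex_seq_rcons eE ve emiss.
by exists s' => //; apply/(legal_transversal_seqP x0).
Qed.

Lemma legal_transversal_size_le_rho s :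
  no_isolated E -> legal_transversal_seq E s -> size s <= rho_gr E.
Proof.
case: s => [//|x0 s] ni.
case/(legal_transversal_seqP x0) => /legal_vertex_seq_staircase [C HC] _.
have [c cover le] := legal_edge_seq_extend ni (staircase_legal_edge_seq HC).
rewrite size_mkseq in le; apply: leq_trans le (leq_max_size cover _).
by apply: legal_edge_seq_size; case/andP: cover.
Qed.

Lemma edge_covering_size_le_tau c :
  no_empty_edge E -> edge_covering_seq E c -> size c <= tau_gr E.
Proof.
case: c => [//|C0 c] ne; case/andP => lc _.
have /set0Pn [x0 _] : C0 != set0.
  by apply: contraNneq ne => <-; case/legal_edge_seqP: lc => _ /(_ C0 (mem_head _ _)).
have [x Hx] := legal_edge_seq_staircase x0 ne lc.
have [s trans le] := legal_vertex_seq_extend ne (staircase_legal_vertex_seq x0 Hx).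
rewrite size_mkseq in le; apply: leq_trans le (leq_max_size trans _).
by case/(legal_transversal_seqP x0): trans => /legal_vertex_seq_size.
Qed.

End Hypergraph.

Theorem mainTheorem18 (X : finType) (E : {set {set X}}) :
  no_isolated E -> no_empty_edge E -> tau_gr E = rho_gr E.
Proof.
move=> ni ne; apply/eqP; rewrite eqn_leq; apply/andP; split.
- by rewrite /tau_gr; apply: max_size_leq => s; apply: legal_transversal_size_le_rho.
- by rewrite /rho_gr; apply: max_size_leq => c; apply: edge_covering_size_le_tau.
Qed.
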